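(* Let $G=(V,E)$ be a finite simple undirected graph, $G_0:=G$, and let $W_1,\dots,W_r$ be distinct subsets of $V$ such that for every $t\in\{1,\dots,r\}$, $W_t$ is a clique of $G_{t-1}$ with $|W_t|\ge2$ and $G_t:=G_{t-1}\mid W_t$. Let $F_0:=STAB(G)$ and $F_t:=\{x\in STAB(G)\mid x_{W_j}=1,\ j=1,\dots,t\}$ for $t\in\{1,\dots,r\}$. Then $F_t\subseteq STAB(G_t)$ for all $t\in\{0,\dots,r\}$.
   Context: For a graph $G=(V,E)$, $\mathcal S(G)\subseteq\{0,1\}^V$ is the set of characteristic vectors of stable sets of $G$, and $STAB(G)=\mathrm{conv}\,\mathcal S(G)$. For $W\subseteq V$ and $x\in\mathbb R^V$, $x_W=\sum_{v\in W}x_v$. The clique projection of a clique $W$ ($|W|\ge2$) of a graph $H=(V,E_H)$ is $H\mid W=(V,E_H\cup\{uv\notin E_H\mid u\ne v,\ W\subseteq N_H(u)\cup N_H(v)\})$, where $N_H(u)$ is the neighborhood of $u$ in $H$. *)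

From mathcomp Require Import all_boot all_order all_algebra.
Set Implicit Arguments. Unset Strict Implicit. Unset Printing Implicit Defensive.
Import Order.TTheory GRing.Theory Num.Theory.
Local Open Scope ring_scope.

(* A finite simple graph on the finite vertex type T is given by its
   adjacency relation e : rel T (assumed symmetric and irreflexive). *)

Definition nbhd (T : finType) (e : rel T) (u : T) : {set T} := [set w | e u w].

Definition is_clique (T : finType) (e : rel T) (W : {set T}) : Prop :=
  forall u v, u \in W -> v \in W -> u != v -> e u v.

Definition stable (T : finType) (e : rel T) (S : {set T}) : bool :=
  [forall u in S, forall v in S, ~~ e u v].

Definition clique_proj (T : finType) (e : rel T) (W : {set T}) : rel T :=
  fun u v => e u v || ((u != v) && (W \subset nbhd e u :|: nbhd e v)).

Definition proj_seq (T : finType) (e : rel T) (Ws : seq {set T}) : rel T :=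
  foldl (@clique_proj T) e Ws.

Definition chi (R : realFieldType) (T : finType) (S : {set T}) : T -> R :=
  fun v => (v \in S)%:R.

Arguments chi R {T} S v.
Definition STAB (R : realFieldType) (T : finType) (e : rel T) : (T -> R) -> Prop :=
  fun x => exists lambda : {set T} -> R,
    (forall S, 0 <= lambda S) /\
    \sum_(S | stable e S) lambda S = 1 /\
    (forall v, x v = \sum_(S | stable e S) lambda S * chi R S v).
Arguments STAB R {T} e x.

Definition xsum (R : realFieldType) (T : finType) (x : T -> R) (W : {set T}) : R :=
  \sum_(v in W) x v.

Definition Fface (R : realFieldType) (T : finType) (e : rel T)
    (Ws : seq {set T}) (t : nat) : (T -> R) -> Prop :=
  fun x => STAB R e x /\ (forall j, (j < t)%N -> xsum x (nth set0 Ws j) = 1).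

From mathcomp Require Import all_boot all_order all_algebra.
Set Implicit Arguments. Unset Strict Implicit. Unset Printing Implicit Defensive.
Import Order.TTheory GRing.Theory Num.Theory.
Local Open Scope ring_scope.

(* Write x \in F_t as a convex combination of stable sets S of G with weights
   lambda_S, and induct on t.  If every S in the support is stable in G_{t-1},
   then it meets the clique W_t of G_{t-1} at most once; since x_{W_t} = 1 is
   the weighted average of the numbers |S :&: W_t| <= 1, each S in the support
   meets W_t exactly once, say in w.  A stable set containing a vertex w of W
   stays stable in the clique projection by W, because w lies in no
   neighbourhood of a vertex of S.  So the same weights exhibit x in
   STAB(G_t). *)

Lemma stableP (T : finType) (e : rel T) (S : {set T}) :
  reflect (forall u v, u \in S -> v \in S -> ~~ e u v) (stable e S).
Proof.
apply: (iffP forall_inP) => [H u v uS vS | H u uS].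
- exact: (forall_inP (H u uS)).
- by apply/forall_inP => v vS; apply: H.
Qed.

Lemma stable_sub (T : finType) (e e' : rel T) (S : {set T}) :
  subrel e e' -> stable e' S -> stable e S.
Proof.
move=> ee' /stableP st; apply/stableP => u v uS vS.
by apply: contraNN (st u v uS vS); apply: ee'.
Qed.

Lemma subrel_proj_seq (T : finType) (e : rel T) (Ws : seq {set T}) :
  subrel e (proj_seq e Ws).
Proof.
elim: Ws e => [|W Ws IH] e u v euv //=.
by apply: IH; rewrite /clique_proj euv.
Qed.

Lemma proj_seq_take_nth (T : finType) (e : rel T) (Ws : seq {set T}) k :
  (k < size Ws)%N ->
  proj_seq e (take k.+1 Ws) =
  clique_proj (proj_seq e (take k Ws)) (nth set0 Ws k).
Proof. by move=> lt_k; rewrite (take_nth set0) // /proj_seq foldl_rcons. Qed.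

Lemma card_stable_clique_le1 (T : finType) (e : rel T) (S W : {set T}) :
  is_clique e W -> stable e S -> (#|S :&: W| <= 1)%N.
Proof.
move=> clW /stableP st; rewrite leqNgt; apply/card_gt1P => -[u [v []]].
rewrite !inE => /andP[uS uW] /andP[vS vW] neq_uv.
by move: (st u v uS vS); rewrite clW.
Qed.

Lemma stable_clique_proj (T : finType) (e : rel T) (S W : {set T}) w :
  w \in S -> w \in W -> stable e S -> stable (clique_proj e W) S.
Proof.
move=> wS wW stS; have /stableP st := stS.
apply/stableP => u v uS vS; rewrite /clique_proj negb_or st //= negb_and negbK.
apply/orP; right; apply/subsetPn; exists w => //.
by rewrite !inE negb_or !st.
Qed.

Lemma sum_chi (R : realFieldType) (T : finType) (S W : {set T}) :
  \sum_(v in W) chi R S v = (#|S :&: W|)%:R.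
Proof.
rewrite -sum1_card natr_sum big_mkcond [RHS]big_mkcond /=.
by apply: eq_bigr => v _; rewrite /chi inE andbC; case: (_ \in _); case: (_ \in _).
Qed.

Lemma weighted_avg_le1_eq1 (R : realDomainType) (I : finType) (P : pred I)
    (a c : I -> R) :
  (forall i, P i -> 0 <= a i) -> \sum_(i | P i) a i = 1 ->
  (forall i, P i -> a i != 0 -> c i <= 1) -> \sum_(i | P i) a i * c i = 1 ->
  forall i, P i -> a i != 0 -> c i = 1.
Proof.
move=> a_ge0 sum_a c_le1 sum_ac i Pi ai_neq0.
have gap_ge0 j : P j -> 0 <= a j * (1 - c j).
  move=> Pj; have [-> | aj_neq0] := eqVneq (a j) 0; first by rewrite mul0r.
  by rewrite mulr_ge0 ?a_ge0 // subr_ge0 c_le1.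
have sum_gap : \sum_(j | P j) a j * (1 - c j) = 0.
  under eq_bigr => j _ do rewrite mulrBr mulr1.
  by rewrite sumrB sum_a sum_ac subrr.
move/eqP: (psumr_eq0P gap_ge0 sum_gap Pi).
by rewrite mulf_eq0 (negbTE ai_neq0) subr_eq0 => /eqP.
Qed.

Section ConvexCombinations.

Variables (R : realFieldType) (T : finType).

Lemma xsum_comb (P : pred {set T}) (lam : {set T} -> R) (x : T -> R) W :
  (forall v, x v = \sum_(S | P S) lam S * chi R S v) ->
  xsum x W = \sum_(S | P S) lam S * (#|S :&: W|)%:R.
Proof.
move=> x_def; rewrite /xsum (eq_bigr _ (fun v _ => x_def v)) exchange_big /=.
by apply: eq_bigr => S _; rewrite -mulr_sumr sum_chi.
Qed.

Lemma STAB_restrict (e e' : rel T) (lam : {set T} -> R) (x : T -> R) :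
  (forall S, 0 <= lam S) -> \sum_(S | stable e S) lam S = 1 ->
  (forall v, x v = \sum_(S | stable e S) lam S * chi R S v) ->
  subrel e e' ->
  (forall S, stable e S -> lam S != 0 -> stable e' S) ->
  STAB R e' x.
Proof.
move=> lam_ge0 lam_sum1 x_def ee' supp_st.
have restrict (g : {set T} -> R) : (forall S, lam S = 0 -> g S = 0) ->
    \sum_(S | stable e' S) g S = \sum_(S | stable e S) g S.
  move=> g0; rewrite [RHS](bigID (stable e')) /= [X in _ + X]big1 ?addr0.
    apply: eq_bigl => S; apply/idP/andP => [st' | []//].
    by split; first exact: stable_sub st'.
  move=> S /andP[stS nst']; apply: g0; apply/eqP.
  by apply: contraNT nst'; apply: supp_st.
exists lam; split=> //; split; first by rewrite restrict.
by move=> v; rewrite x_def restrict // => S ->; rewrite mul0r.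
Qed.

Variables (e : rel T) (lam : {set T} -> R) (x : T -> R).
Hypotheses (lam_ge0 : forall S, 0 <= lam S)
           (lam_sum1 : \sum_(S | stable e S) lam S = 1)
           (x_def : forall v, x v = \sum_(S | stable e S) lam S * chi R S v).

Lemma support_stable_clique_proj (e' : rel T) (W : {set T}) :
  is_clique e' W -> xsum x W = 1 ->
  (forall S, stable e S -> lam S != 0 -> stable e' S) ->
  forall S, stable e S -> lam S != 0 -> stable (clique_proj e' W) S.
Proof.
move=> clW xW1 supp_st S stS lamS_neq0.
have meet1 : (#|S :&: W|)%:R = 1 :> R.
  apply: (@weighted_avg_le1_eq1 R _ (stable e) lam (fun S' => (#|S' :&: W|)%:R)
            (fun S' _ => lam_ge0 S') lam_sum1 _ _ S stS lamS_neq0).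
    by move=> S' stS' lam_neq0; rewrite lern1 (card_stable_clique_le1 clW) ?supp_st.
  by rewrite -(xsum_comb W x_def).
have [w] : exists w, w \in S :&: W.
  by apply/set0Pn; rewrite -card_gt0 -(ltr_nat R) meet1 ltr01.
rewrite inE => /andP[wS wW].
exact: (stable_clique_proj wS wW (supp_st S stS lamS_neq0)).
Qed.

Lemma support_stable_proj_seq (Ws : seq {set T}) t :
  (t <= size Ws)%N ->
  (forall k, (k < t)%N -> is_clique (proj_seq e (take k Ws)) (nth set0 Ws k)) ->
  (forall k, (k < t)%N -> xsum x (nth set0 Ws k) = 1) ->
  forall S, stable e S -> lam S != 0 -> stable (proj_seq e (take t Ws)) S.
Proof.
elim: t => [|k IH] le_t_size clWs xWs1 S stS lamS_neq0; first by rewrite take0.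
rewrite proj_seq_take_nth //; apply: support_stable_clique_proj => //.
- exact: clWs.
- exact: xWs1.
- by apply: IH => [|j /ltnW|j /ltnW]; [exact: ltnW | apply: clWs | apply: xWs1].
Qed.

End ConvexCombinations.

Theorem lemma5 (R : realFieldType) (T : finType) (e : rel T)
  (e_sym : symmetric e) (e_irr : irreflexive e)
  (Ws : seq {set T}) (Ws_uniq : uniq Ws)
  (Ws_clique : forall t, (t < size Ws)%N ->
      is_clique (proj_seq e (take t Ws)) (nth set0 Ws t) /\
      (2 <= #|nth set0 Ws t|)%N) :
  forall t, (t <= size Ws)%N ->
    forall x : T -> R, Fface e Ws t x -> STAB R (proj_seq e (take t Ws)) x.
Proof.
move=> t le_t_size x [[lam [lam_ge0 [lam_sum1 x_def]]] xWs1].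
apply: (STAB_restrict lam_ge0 lam_sum1 x_def); first exact: subrel_proj_seq.
apply: (support_stable_proj_seq lam_ge0 lam_sum1 x_def le_t_size) => // k lt_kt.
by case: (Ws_clique k (leq_trans lt_kt le_t_size)).
Qed.
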